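(* Consider two trains on a single shared track through three consecutive stations $A,B,C$, with all event times given by a dispatching timetable $t$ (i.e. $t_e=\pi_e+x_e$ is the rescheduled time of event $e$). Train 1 has departure event $u$ at $A$, arrival event $v$ at $B$, departure event $w$ at $B$, and arrival event $z$ at $C$. Train 2 runs in the opposite direction, with departure event $u'$ at $C$, arrival event $v'$ at $B$, departure event $w'$ at $B$, and arrival event $z'$ at $A$. Assume all of these trips and both waiting activities $(v,w)$ and $(v',w')$ are part of the solution, so that the following constraints hold, with real constants $S$ (safety margin), $0\le L^{min}_{vw}$, $0\le L^{min}_{v'w'}$ and $0\le L^{min}_{a}\le L^{max}_{a}$ for each driving activity $a\in\{(u,v),(w,z),(u',v'),(w',z')\}$: (1) Driving times: $L^{min}_{a}\le t_{\text{head}(a)}-t_{\text{tail}(a)}\le L^{max}_{a}$ for each of the four driving activities $a$. (2) Waiting times: $t_w-t_v\ge L^{min}_{vw}$ and $t_{w'}-t_{v'}\ge L^{min}_{v'w'}$. (3) Track $A$–$B$: binaries $g_{uw'},g_{w'u}\in\{0,1\}$ with $g_{uw'}+g_{w'u}=1$; if $g_{uw'}=1$ then $t_{w'}\ge t_u+L^{max}_{uv}+S$; if $g_{w'u}=1$ then $t_u\ge t_{w'}+L^{max}_{w'z'}+S$. (4) Track $B$–$C$: binaries $g_{wu'},g_{u'w}\in\{0,1\}$ with $g_{wu'}+g_{u'w}=1$; if $g_{wu'}=1$ then $t_{u'}\ge t_w+L^{max}_{wz}+S$; if $g_{u'w}=1$ then $t_w\ge t_{u'}+L^{max}_{u'v'}+S$.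 (5) Platform at $B$: binaries $h_{vv'},h_{v'v}\in\{0,1\}$ with $h_{vv'}+h_{v'v}=1$; if $h_{vv'}=1$ then $t_{v'}\ge t_w+S$; if $h_{v'v}=1$ then $t_v\ge t_{w'}+S$. If the safety margin satisfies $$S>\tfrac12\max\{L^{max}_{wz}-L^{min}_{wz},\;L^{max}_{uv}-L^{min}_{uv}\},$$ then $g_{uw'}=h_{vv'}=g_{wu'}$.
   Context: This models a railway event-activity network: events are departures and arrivals of trains at stations with scheduled times $\pi_e$ and delays $x_e\ge 0$; driving activities connect a departure to the next arrival, waiting activities connect an arrival at a station to the subsequent departure of the same train from that station. Headway binaries $g$ on a shared track encode which of two conflicting departures uses the track first (for opposite directions the second train must wait for the maximal transit time $L^{max}$ of the first trip plus the safety margin $S$), and platform binaries $h$ encode which train occupies the shared platform at $B$ first ($h_{vv'}=1$ meaning train 1 departs from $B$ at least $S$ before train 2 arrives at $B$). The constraints (1)–(5) listed in the claim are exactly those of the integer program that apply when all involved activities are active. *)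

From Stdlib Require Export Reals.
Open Scope R_scope.

Definition binary (b : nat) : Prop := (b = 0%nat \/ b = 1%nat).

From Stdlib Require Import Reals Lra Lia.
Open Scope R_scope.

Lemma safety_margin_pos (S a b c : R) :
  0 <= a <= b -> S > / 2 * Rmax c (b - a) -> 0 < S.
Proof. intros Hab HS. pose proof (Rmax_r c (b - a)). lra. Qed.

Lemma track_first_platform_first (S L dep arr dep' : R) :
  0 < S -> arr - dep <= L -> dep' >= dep + L + S -> arr >= dep' + S -> False.
Proof. lra. Qed.

Lemma cyclic_precedence_absurd (S L a b c d e : R) :
  0 < S -> 0 <= L ->
  b >= a + L + S -> b <= c -> c <= d -> e >= d + S -> e <= a -> False.
Proof. lra. Qed.

Theorem lemma1
  (tu tv tw tz tu' tv' tw' tz' : R)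
  (S Lmin_vw Lmin_v'w' : R)
  (Lmin_uv Lmax_uv Lmin_wz Lmax_wz Lmin_u'v' Lmax_u'v' Lmin_w'z' Lmax_w'z' : R)
  (g_uw' g_w'u g_wu' g_u'w h_vv' h_v'v : nat)
  (HLvw : 0 <= Lmin_vw) (HLv'w' : 0 <= Lmin_v'w')
  (HLuv : 0 <= Lmin_uv <= Lmax_uv) (HLwz : 0 <= Lmin_wz <= Lmax_wz)
  (HLu'v' : 0 <= Lmin_u'v' <= Lmax_u'v') (HLw'z' : 0 <= Lmin_w'z' <= Lmax_w'z')
  (D_uv : Lmin_uv <= tv - tu <= Lmax_uv)
  (D_wz : Lmin_wz <= tz - tw <= Lmax_wz)
  (D_u'v' : Lmin_u'v' <= tv' - tu' <= Lmax_u'v')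
  (D_w'z' : Lmin_w'z' <= tz' - tw' <= Lmax_w'z')
  (W_vw : tw - tv >= Lmin_vw)
  (W_v'w' : tw' - tv' >= Lmin_v'w')
  (B_uw' : binary g_uw') (B_w'u : binary g_w'u) (Sum3 : (g_uw' + g_w'u = 1)%nat)
  (T3a : g_uw' = 1%nat -> tw' >= tu + Lmax_uv + S)
  (T3b : g_w'u = 1%nat -> tu >= tw' + Lmax_w'z' + S)
  (B_wu' : binary g_wu') (B_u'w : binary g_u'w) (Sum4 : (g_wu' + g_u'w = 1)%nat)
  (T4a : g_wu' = 1%nat -> tu' >= tw + Lmax_wz + S)
  (T4b : g_u'w = 1%nat -> tw >= tu' + Lmax_u'v' + S)
  (B_vv' : binary h_vv') (B_v'v : binary h_v'v) (Sum5 : (h_vv' + h_v'v = 1)%nat)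
  (P5a : h_vv' = 1%nat -> tv' >= tw + S)
  (P5b : h_v'v = 1%nat -> tv >= tw' + S)
  (HS : S > / 2 * Rmax (Lmax_wz - Lmin_wz) (Lmax_uv - Lmin_uv)) :
  g_uw' = h_vv' /\ h_vv' = g_wu'.
Proof.
  pose proof (safety_margin_pos _ _ _ _ HLuv HS) as HS0.
  assert (not_uw'_v'v : ~ (g_uw' = 1%nat /\ h_v'v = 1%nat)).
  { intros [G H]. apply (track_first_platform_first S Lmax_uv tu tv tw'); auto; lra. }
  assert (not_u'w_vv' : ~ (g_u'w = 1%nat /\ h_vv' = 1%nat)).
  { intros [G H]. apply (track_first_platform_first S Lmax_u'v' tu' tv' tw); auto; lra. }
  assert (not_w'u_vv' : ~ (g_w'u = 1%nat /\ h_vv' = 1%nat)).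
  { intros [G H].
    apply (cyclic_precedence_absurd S Lmax_w'z' tw' tu tv tw tv'); auto; lra. }
  assert (not_wu'_v'v : ~ (g_wu' = 1%nat /\ h_v'v = 1%nat)).
  { intros [G H].
    apply (cyclic_precedence_absurd S Lmax_wz tw tu' tv' tw' tv); auto; lra. }
  lia.
Qed.
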